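(* Let $A_1,\dots,A_k$ be $n$-dimensional boxes, and let $\mathcal{O}$ be a set of orders of them (innermost to outermost) each of which is a possible arrangement. (1) For any constant $\lambda>0$, the boxes obtained by multiplying all closed side lengths of all $A_j$ by $\lambda$ can be put in every order of $\mathcal{O}$ (with corresponding labels). (2) For any constant $c>0$, the boxes obtained by adding $c$ to all closed side lengths of all $A_j$ can be put in every order of $\mathcal{O}$.
   Context: An $n$-dimensional box $A$ has closed side lengths $a_1\le\dots\le a_n$ (positive reals). A state of $A$ is either closed or expanded along one side $i$: $a_i$ is replaced by $a_i'$ with $a_i\le a_i'\le 2a_i$, other sides unchanged (only one side can expand). The dimension vector of a state is its side lengths sorted non-decreasingly. A box in some state fits inside another box in some state if each coordinate of the outer one's dimension vector is strictly larger than the corresponding coordinate of the inner one's. An order $X_1,\dots,X_k$ (innermost to outermost) is a possible arrangement if each box can be given a state so that $X_j$ fits inside $X_{j+1}$ for all $j$; states may differ between arrangements. *)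

From mathcomp Require Import all_boot all_order.
From mathcomp Require Import fingroup perm.
From mathcomp Require Import all_algebra.
Set Implicit Arguments. Unset Strict Implicit. Unset Printing Implicit Defensive.
Import Order.TTheory GRing.Theory Num.Theory.
Local Open Scope ring_scope.

(* A box in dimension n: its closed side lengths, indexed by 'I_n. *)
Section Boxes.
Variable R : realFieldType.
Variable n : nat.

Definition box_pos (a : 'I_n -> R) : Prop := forall i, 0 < a i.

Definition is_state (a s : 'I_n -> R) : Prop :=
  (forall j, s j = a j) \/
  (exists i, a i <= s i <= 2 * a i /\ forall j, j != i -> s j = a j).

Definition dimvec (s : 'I_n -> R) : seq R := sort <=%R [seq s i | i <- enum 'I_n].

Definition fits (inner outer : 'I_n -> R) : bool :=
  [forall i : 'I_n, nth 0 (dimvec inner) i < nth 0 (dimvec outer) i].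

Variable k : nat.

(* The order p (X_1 = A (p 0), ..., X_k = A (p (k-1)), innermost to outermost)
   is a possible arrangement of the boxes A. *)
Definition possible_arrangement (A : 'I_k -> 'I_n -> R) (p : 'S_k) : Prop :=
  exists st : 'I_k -> 'I_n -> R,
    (forall j, is_state (A j) (st j)) /\
    sorted (fun x y => fits (st x) (st y)) [seq p i | i <- enum 'I_k].
End Boxes.

From mathcomp Require Import all_boot all_order.
From mathcomp Require Import fingroup perm.
From mathcomp Require Import all_algebra.
From mathcomp Require Import lra.
Import Order.TTheory GRing.Theory Num.Theory.
Local Open Scope ring_scope.

(* Both operations apply a strictly increasing map f coordinatewise to every
   side length. Such a map commutes with sorting, so it transports the
   dimension vectors and preserves strict fitting; and both x |-> lambda x and
   x |-> x + c send a state of a box to a state of the transformed box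
   (s <= 2a gives s + c <= 2(a + c)). Hence the transformed boxes admit every
   arrangement the original ones admit, with the transformed states. *)

Section IncreasingMap.
Variables (R : realFieldType) (n : nat) (f : R -> R).
Hypothesis f_inc : {homo f : x y / x < y}.

Lemma dimvec_map (s : 'I_n -> R) : dimvec (f \o s) = map f (dimvec s).
Proof. by rewrite /dimvec (map_comp f s) (map_sort (le_mono f_inc)). Qed.

Lemma size_dimvec (s : 'I_n -> R) : size (dimvec s) = n.
Proof. by rewrite size_sort size_map size_enum_ord. Qed.

Lemma fits_map (s t : 'I_n -> R) : fits s t -> fits (f \o s) (f \o t).
Proof.
move=> /forallP s_in_t; apply/forallP => i.
by rewrite !dimvec_map !(nth_map 0) ?size_dimvec // f_inc.
Qed.

Lemma possible_arrangement_map (k : nat) (A B : 'I_k -> 'I_n -> R) (p : 'S_k) :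
  (forall j s, is_state (A j) s -> is_state (B j) (f \o s)) ->
  possible_arrangement A p -> possible_arrangement B p.
Proof.
move=> state_map [st [st_state st_sorted]].
exists (fun j => f \o st j); split; first by move=> j; exact: state_map.
by apply: sub_sorted st_sorted => x y; exact: fits_map.
Qed.

End IncreasingMap.

Section StateTransforms.
Variables (R : realFieldType) (n : nat) (a s : 'I_n -> R).

Lemma is_state_scale (lambda : R) : 0 < lambda -> is_state a s ->
  is_state (fun i => lambda * a i) (fun i => lambda * s i).
Proof.
move=> lambda_gt0 [closed | [i [/andP[a_le_s s_le_2a] s_eq_a]]].
  by left => j; rewrite closed.
right; exists i; split; last by move=> j /s_eq_a ->.
by rewrite ler_pM2l // a_le_s /= mulrCA ler_pM2l.
Qed.

Lemma is_state_shift (c : R) : 0 <= c -> is_state a s ->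
  is_state (fun i => a i + c) (fun i => s i + c).
Proof.
move=> c_ge0 [closed | [i [/andP[a_le_s s_le_2a] s_eq_a]]].
  by left => j; rewrite closed.
right; exists i; split; last by move=> j /s_eq_a ->.
by rewrite lerD2r a_le_s /=; lra.
Qed.

End StateTransforms.

Theorem proposition24 (R : realFieldType) (n k : nat) (A : 'I_k -> 'I_n -> R)
  (O : {set 'S_k}) :
  (forall j, box_pos (A j)) ->
  (forall p, p \in O -> possible_arrangement A p) ->
  (forall lambda : R, 0 < lambda ->
     forall p, p \in O -> possible_arrangement (fun j i => lambda * A j i) p) /\
  (forall c : R, 0 < c ->
     forall p, p \in O -> possible_arrangement (fun j i => A j i + c) p).
Proof.
move=> _ arrangeable; split.
- move=> lambda lambda_gt0 p pO.
  apply: (@possible_arrangement_map R n ( *%R lambda)) (arrangeable p pO).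
    by move=> x y; rewrite ltr_pM2l.
  by move=> j s; exact: is_state_scale.
- move=> c c_gt0 p pO.
  apply: (@possible_arrangement_map R n (+%R^~ c)) (arrangeable p pO).
    by move=> x y; rewrite ltrD2r.
  by move=> j s; apply: is_state_shift; exact: ltW.
Qed.
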